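(* Let $C$ be a conformal algebra and $t(b_1,\dots,b_n)$ a non-associative monomial obtained from $b_1\cdots b_n$ by some bracketing. Then for all $a_1,\dots,a_n\in C$ and all integers $k_1,\dots,k_{n-1}$ and $x_n\in\Bbbk[t,t^{-1}]$, $$t\big(a_1(t^{k_1}),\dots,a_{n-1}(t^{k_{n-1}}),a_n(x_n)\big)=\sum_{s_1,\dots,s_{n-1}\ge0}\prod_{i=1}^{n-1}\binom{k_i}{s_i}\;P^{t^{s_1}\otimes\cdots\otimes t^{s_{n-1}}}_{\,t^{\sum_i(k_i-s_i)}x_n}\big(t^*(a_1,\dots,a_n)\big),$$ where only finitely many terms of the sum are nonzero. (In the paper's notation: $t(\bar a(\bar x))=P^{x_{1(2)}\otimes\cdots\otimes x_{n-1(2)}}_{x_{1(1)}\cdots x_{n-1(1)}x_n}t^*(\bar a)$, using the extended coproduct $\Delta(t^k)=\sum_{s\ge0}\binom ks t^{k-s}\otimes t^s$, $k\in\mathbb Z$.)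
   Context: $\Bbbk$ is a field of characteristic $0$, $H=\Bbbk[D]$ with Hopf structure $\Delta(D)=D\otimes1+1\otimes D$, $\varepsilon(D)=0$, $S(D)=-D$; iterated coproduct $\Delta^{(1)}=\mathrm{id}$, $\Delta^{(k+1)}=(\mathrm{id}\otimes\Delta^{(k)})\Delta$; $H$ acts on $H^{\otimes n}$ from the right by $(f_1\otimes\cdots\otimes f_n)h=f_1h_{(1)}\otimes\cdots\otimes f_nh_{(n)}$ and $H^{\otimes n}\otimes_H M$ is taken w.r.t. this action. A conformal algebra is a unital left $H$-module $C$ with bilinear operations $a_{(n)}b$ ($n\ge0$) such that $a_{(n)}b=0$ for $n\gg0$, $(Da)_{(n)}b=-na_{(n-1)}b$, $a_{(n)}(Db)=D(a_{(n)}b)+na_{(n-1)}b$. Pseudoproduct $a*b=\sum_{s\ge0}\frac{(-D)^s}{s!}\otimes1\otimes_H(a_{(s)}b)$; expanded pseudoproduct: if $a*b=\sum_i f_i\otimes g_i\otimes_H c_i$ then $(F\otimes_H a)*(G\otimes_H b)=\sum_iF\Delta^{(n)}(f_i)\otimes G\Delta^{(m)}(g_i)\otimes_H c_i$. For a bracketing $t$, $t^*(a_1,\dots,a_n)\in H^{\otimes n}\otimes_HC$ is obtained by replacing each product by the expanded pseudoproduct, with $a_i$ regarded as $1\otimes_H a_i$. Coefficient algebra: $\operatorname{Coeff}C=\Bbbk[t,t^{-1}]\otimes_HC$ ($\Bbbk[t,t^{-1}]$ a right $H$-module via $t^nD=-nt^{n-1}$), $a(x):=x\otimes_Ha$, with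 product $a(t^n)b(t^m)=\sum_{s\ge0}\binom ns(a_{(s)}b)(t^{n+m-s})$; $t(\dots)$ on the left is evaluated in $\operatorname{Coeff}C$. Pairing $\langle t^k,D^m\rangle=k!\,\delta_{k,m}$ between $\Bbbk[t]$ and $H$; antipode $S(t)=-t$ on $\Bbbk[t]$. Let $\theta:H^{\otimes n}\otimes_HC\to H^{\otimes(n-1)}\otimes C$ be the isomorphism $(h_1\otimes\cdots\otimes h_{n-1}\otimes1)\otimes_Hc\mapsto h_1\otimes\cdots\otimes h_{n-1}\otimes c$. For $x_i\in\Bbbk[t]$, $P^{x_1\otimes\cdots\otimes x_{n-1}}=(\langle S(x_1),\cdot\rangle\otimes\cdots\otimes\langle S(x_{n-1}),\cdot\rangle\otimes\mathrm{id}_C)\theta:H^{\otimes n}\otimes_HC\to C$, and $P^{\bar x}_y(A):=y\otimes_HP^{\bar x}(A)\in\operatorname{Coeff}C$ for $y\in\Bbbk[t,t^{-1}]$. *)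

From HB Require Import structures.
From mathcomp Require Import all_boot all_order all_algebra.
From Stdlib Require Import ClassicalEpsilon.
Set Implicit Arguments.
Unset Strict Implicit.
Unset Printing Implicit Defensive.
Import Order.TTheory GRing.Theory Num.Theory.
Local Open Scope ring_scope.

Section Conformal.
Variables (R : fieldType) (C : lmodType R).

(* Conformal algebra: a k-vector space C with a linear map D (the action  *)
(* of D in H = k[D]) and k-bilinear products a_(n) b, n >= 0.             *)
Definition is_conformal (D : C -> C) (pr : nat -> C -> C -> C) : Prop :=
  (forall (r : R) (u v : C), D (r *: u + v) = r *: D u + D v) /\
  [/\
      (forall n (b : C) (r : R) (u v : C),
          pr n (r *: u + v) b = r *: pr n u b + pr n v b),
      (forall n (a : C) (r : R) (u v : C),
          pr n a (r *: u + v) = r *: pr n a u + pr n a v),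
      (forall a b : C, exists N : nat, forall n, (N <= n)%N -> pr n a b = 0),
      (forall n (a b : C), pr n (D a) b = - (n%:R *: pr n.-1 a b)) &
      (forall n (a b : C), pr n a (D b) = D (pr n a b) + n%:R *: pr n.-1 a b)].

(* Some N with a_(n) b = 0 for all n >= N (exists by locality; chosen by  *)
(* classical choice; the definitions below do not depend on the choice).  *)
Definition loc_bound (pr : nat -> C -> C -> C) (a b : C) : nat :=
  epsilon (inhabits 0%N) (fun N => forall n, (N <= n)%N -> pr n a b = 0).

Definition gbinom (k : int) (s : nat) : R :=
  (\prod_(i < s) (k - i%:Z)%:~R) / (s`!)%:R.

(* Coefficient algebra Coeff C = k[t,t^-1] (x)_H C.                        *)
(* k[t,t^-1] (x)_k C is represented by formal sums  sum (e, c) = t^e (x) c *)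
(* (coordinates: coeff_ev u e), and equality in Coeff C is equality modulo *)
(* the span of the relations  x (x) D a - (x D) (x) a, i.e. (since         *)
(* t^e D = - e t^(e-1))  t^e (x) D a + e t^(e-1) (x) a.                    *)
Definition coeff_el := seq (int * C).

Definition coeff_ev (u : coeff_el) (e : int) : C :=
  \sum_(p <- u | p.1 == e) p.2.

Definition coeff_rels (D : C -> C) (rel : seq (int * C)) : coeff_el :=
  flatten [seq [:: (p.1, D p.2); (p.1 - 1, p.1%:~R *: p.2)] | p <- rel].

Definition coeff_eq (D : C -> C) (u v : coeff_el) : Prop :=
  exists rel : seq (int * C),
    forall e : int, coeff_ev u e - coeff_ev v e = coeff_ev (coeff_rels D rel) e.

(* product a(t^n) b(t^m) = sum_s binom(n,s) (a_(s) b)(t^(n+m-s)),          *)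
(* extended bilinearly to formal sums                                      *)
Definition coeff_mul (pr : nat -> C -> C -> C) (u v : coeff_el) : coeff_el :=
  flatten [seq flatten [seq
     [seq (p.1 + q.1 - s%:Z, gbinom p.1 s *: pr s p.2 q.2)
        | s <- iota 0 (loc_bound pr p.2 q.2)]
     | q <- v] | p <- u].

Definition coeff_scale (r : R) (u : coeff_el) : coeff_el :=
  [seq (p.1, r *: p.2) | p <- u].

(* H^{(x) n} (x)_H C, represented through the isomorphism theta by         *)
(* H^{(x)(n-1)} (x) C:  a formal sum of (m, c), m = [m_1;...;m_(n-1)],     *)
(* standing for theta^-1 (D^m_1 (x) ... (x) D^m_(n-1) (x) c)               *)
(*             = (D^m_1 (x) ... (x) D^m_(n-1) (x) 1) (x)_H c.              *)
(* Elements of H^{(x) k} are formal sums (m, r) = r D^m_1 (x)...(x) D^m_k. *)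
Definition tens_el := seq (seq nat * C).
Definition Htens := seq (seq nat * R).

(* Delta(D^s) = sum_l binom(s,l) D^l (x) D^(s-l);                          *)
(* Delta^(1) = id, Delta^(k+1) = (id (x) Delta^(k)) Delta.                 *)
Fixpoint iDelta (k : nat) (s : nat) : Htens :=
  match k with
  | 0 => [::]  (* unused: Delta^(k) is only defined for k >= 1 *)
  | 1 => [:: ([:: s], 1)]
  | k'.+1 =>
      flatten [seq [seq (l :: q.1, ('C(s, l))%:R * q.2) | q <- iDelta k' (s - l)]
                | l <- iota 0 s.+1]
  end.

Definition mon_mul (m m' : seq nat) : seq nat := [seq (p.1 + p.2)%N | p <- zip m m'].

(* theta: (h_1 (x)...(x) h_(n-1) (x) 1) (x)_H c |-> h_1 (x)...(x) h_(n-1) (x) c;   *)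
(* applied to monomials whose last factor is 1 (= D^0)                     *)
Definition theta_mon (m : seq nat) : seq nat := take (size m).-1 m.

(* Expanded pseudoproduct of A in H^{(x) n1} (x)_H C and B in H^{(x) n2} (x)_H C. *)
(* A = sum (D^m (x) 1) (x)_H a,  B = sum (D^m' (x) 1) (x)_H b,             *)
(* a * b = sum_s ((-D)^s / s!) (x) 1 (x)_H a_(s) b, hence                   *)
(* A * B = sum (D^m (x) 1) Delta^(n1)((-D)^s/s!) (x) (D^m' (x) 1) (x)_H a_(s) b. *)
Definition pseudo (pr : nat -> C -> C -> C) (n1 : nat) (A B : tens_el) : tens_el :=
  flatten [seq flatten [seq flatten [seq
     [seq (theta_mon (mon_mul (rcons p.1 0%N) j.1 ++ rcons q.1 0%N),
           ((-1) ^+ s / (s`!)%:R * j.2) *: pr s p.2 q.2)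
       | j <- iDelta n1 s]
     | s <- iota 0 (loc_bound pr p.2 q.2)]
     | q <- B] | p <- A].

End Conformal.

Inductive bracketing : Type :=
| BLeaf : bracketing
| BNode : bracketing -> bracketing -> bracketing.

Fixpoint leaves (t : bracketing) : nat :=
  match t with BLeaf => 1%N | BNode t1 t2 => (leaves t1 + leaves t2)%N end.

Section Eval.
Variables (R : fieldType) (C : lmodType R).

Fixpoint eval_coeff (pr : nat -> C -> C -> C) (t : bracketing) (us : seq (coeff_el C))
  : coeff_el C :=
  match t with
  | BLeaf => head [::] us
  | BNode t1 t2 => coeff_mul pr (eval_coeff pr t1 (take (leaves t1) us))
                                (eval_coeff pr t2 (drop (leaves t1) us))
  end.

(* t^*(a_1,...,a_n) in H^{(x) n} (x)_H C (theta-representation), a_i = 1 (x)_H a_i *)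
Fixpoint tstar (pr : nat -> C -> C -> C) (t : bracketing) (a : seq C) : tens_el C :=
  match t with
  | BLeaf => [:: ([::], head 0 a)]
  | BNode t1 t2 => pseudo pr (leaves t1) (tstar pr t1 (take (leaves t1) a))
                                         (tstar pr t2 (drop (leaves t1) a))
  end.

(* pairing <t^k, D^m> = k! delta_{k,m}; antipode S(t^k) = (-1)^k t^k *)
Definition pairing (k m : nat) : R := if k == m then (k`!)%:R else 0.
Definition pairingS (k m : nat) : R := (-1) ^+ k * pairing k m.

(* P^{t^s_1 (x)...(x) t^s_(n-1)} : H^{(x) n} (x)_H C -> C, computed on theta(A) *)
Definition Pmap (s : seq nat) (A : tens_el C) : C :=
  \sum_(p <- A) (\prod_(i < size s) pairingS (nth 0%N s i) (nth 0%N p.1 i)) *: p.2.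

(* P^{xbar}_y (A) = y (x)_H P^{xbar}(A), y = sum r t^e a Laurent polynomial *)
Definition Pmap_y (s : seq nat) (y : seq (int * R)) (A : tens_el C) : coeff_el C :=
  [seq (q.1, q.2 *: Pmap s A) | q <- y].

End Eval.

Fixpoint tuples_below (N k : nat) : seq (seq nat) :=
  match k with
  | 0 => [:: [::]]
  | k'.+1 => flatten [seq [seq i :: s | s <- tuples_below N k'] | i <- iota 0 N]
  end.

(* Compute in k[t,t^-1] (x) C, before passing to the quotient Coeff C.  For the right
   action of H on Laurent polynomials, t^k D^m = risef (-k) m t^(k-m).  Hence, by
   induction on the bracketing, t(a_1(t^(k_1)), ..., a_n(x_n)) is the closed form
   obtained by letting each monomial (D^(m_1) (x) ... (x) D^(m_(n-1)) (x) 1) (x)_H c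
   of t^*(a) act on t^(k_1) (x) ... (x) t^(k_(n-1)) (x) x_n.  In the inductive step
   the expanded pseudoproduct applies Delta^(n_1) to (-D)^s/s!, and the multinomial
   Vandermonde identity for rising factorials turns the resulting sum back into the
   binomial coefficient binom(k,s) of the product in Coeff C.  Finally
   risef (-k) m = binom(k,m) <S(t^m), D^m> (this needs m! <> 0) and the pairing is
   diagonal, so summing P^(t^(s_1) (x) ... (x) t^(s_(n-1))) over all s below the
   degrees occurring in t^*(a) recovers the closed form. *)

From HB Require Import structures.
From mathcomp Require Import all_boot all_order all_algebra.
From mathcomp Require Import ring zify.
From Stdlib Require Import ClassicalEpsilon.
Import Order.TTheory GRing.Theory Num.Theory.
Local Open Scope ring_scope.
Set Implicit Arguments.
Unset Strict Implicit.
Unset Printing Implicit Defensive.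

Section RisingFactorial.
Variable R : comPzRingType.

Definition risef (x : R) (m : nat) : R := \prod_(i < m) (x + i%:R).

Lemma risef0 x : risef x 0 = 1.
Proof. by rewrite /risef big_ord0. Qed.

Lemma risefS x m : risef x m.+1 = risef x m * (x + m%:R).
Proof. by rewrite /risef big_ord_recr. Qed.

Lemma risefD x m j : risef x (m + j) = risef x m * risef (x + m%:R) j.
Proof.
rewrite /risef big_split_ord /=; congr (_ * _); apply: eq_bigr => i _.
by rewrite natrD addrA.
Qed.

Lemma risef_vandermonde x y r :
  risef (x + y) r = \sum_(0 <= l < r.+1) 'C(r, l)%:R * risef x l * risef y (r - l).
Proof.
elim: r => [|r IHr]; first by rewrite big_nat1 !risef0 bin0 !mulr1.
have split_last_factor : \sum_(0 <= l < r.+1) 'C(r, l)%:R * risef x l * risef y (r - l)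
      * (x + y + r%:R) =
    \sum_(0 <= l < r.+1) 'C(r, l)%:R * risef x l.+1 * risef y (r - l)
  + \sum_(0 <= l < r.+1) 'C(r, l)%:R * risef x l * risef y (r - l).+1.
  rewrite -big_split /=; apply: eq_big_nat => l /andP [_ lr].
  have -> : r%:R = l%:R + (r - l)%:R :> R by rewrite -natrD subnKC // -ltnS.
  rewrite !risefS; ring.
have pascal : \sum_(0 <= l < r.+1) 'C(r.+1, l.+1)%:R * risef x l.+1 * risef y (r.+1 - l.+1) =
    \sum_(0 <= l < r.+1) 'C(r, l)%:R * risef x l.+1 * risef y (r - l)
  + \sum_(0 <= l < r.+1) 'C(r, l.+1)%:R * risef x l.+1 * risef y (r - l).
  by rewrite -big_split /=; apply: eq_big_nat => l _; rewrite subSS binS natrD; ring.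
rewrite risefS IHr mulr_suml split_last_factor [RHS]big_nat_recl // pascal.
rewrite bin0 risef0 mulr1 subn0 addrCA; congr (_ + _).
rewrite [LHS]big_nat_recl // bin0 risef0 subn0 mulr1; congr (_ + _).
rewrite [in RHS]big_nat_recr //= bin_small // !mul0r addr0.
by apply: eq_big_nat => l /andP [_ lr]; rewrite subnSK.
Qed.

End RisingFactorial.

Lemma risef_opp_int (R : comPzRingType) (K : int) s :
  risef (- K%:~R) s = (-1) ^+ s * \prod_(i < s) (K - i%:Z)%:~R :> R.
Proof.
rewrite /risef (eq_bigr (fun i : 'I_s => - (K - i%:Z)%:~R)) ?prodrN ?card_ord //.
by move=> i _; rewrite rmorphB opprB addrC.
Qed.

Lemma gbinom_risef (R : fieldType) (K : int) s :
  gbinom R K s = (-1) ^+ s / (s`!)%:R * risef (- K%:~R) s.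
Proof. by rewrite risef_opp_int /gbinom [RHS]mulrAC signrMK. Qed.

Lemma gbinom_pairingS (R : fieldType) (K : int) m : [pchar R] =i pred0 ->
  gbinom R K m * pairingS R m m = risef (- K%:~R) m.
Proof.
move=> char0; have fact_neq0 : (m`!)%:R != 0 :> R.
  by rewrite ((pcharf0P R).1 char0) -lt0n fact_gt0.
rewrite gbinom_risef /pairingS /pairing eqxx [LHS]mulrC mulrA mulrACA divff //.
by rewrite -exprMn mulrNN !(mulr1, mul1r, expr1n).
Qed.

Section IteratedCoproduct.
Variable R : fieldType.

Lemma iDeltaSS k s : iDelta R k.+2 s =
  flatten [seq [seq (l :: q.1, ('C(s, l))%:R * q.2) | q <- iDelta R k.+1 (s - l)]
             | l <- iota 0 s.+1].
Proof. by []. Qed.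

Lemma iDelta_shape k s j : j \in iDelta R k.+1 s ->
  size j.1 = k.+1 /\ (\sum_(i < k.+1) nth 0%N j.1 i)%N = s.
Proof.
elim: k s j => [|k IHk] s j; first by rewrite inE => /eqP -> /=; rewrite big_ord1.
rewrite iDeltaSS => /flattenP [_ /mapP [l l_lt ->]] /mapP [q q_in ->] /=.
have [-> sum_q] := IHk _ _ q_in; split=> //.
by rewrite big_ord_recl /= sum_q subnKC //; rewrite mem_iota in l_lt.
Qed.

Lemma iDelta_risef k s (x : nat -> R) :
  \sum_(j <- iDelta R k.+1 s) j.2 * \prod_(i < k.+1) risef (x i) (nth 0%N j.1 i)
  = risef (\sum_(i < k.+1) x i) s.
Proof.
elim: k s x => [|k IHk] s x; first by rewrite /= big_seq1 !big_ord1 mul1r.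
rewrite iDeltaSS big_flatten big_map big_ord_recl risef_vandermonde /index_iota subn0.
apply: eq_bigr => l _; rewrite big_map -(IHk (s - l)%N (fun i => x i.+1)) mulr_sumr.
by apply: eq_bigr => q _; rewrite big_ord_recl /=; ring.
Qed.

End IteratedCoproduct.

Lemma eq_big_iota_vanishing (V : nmodType) (F : nat -> V) M1 M2 :
  (forall n, (M1 <= n)%N -> F n = 0) -> (forall n, (M2 <= n)%N -> F n = 0) ->
  \sum_(s <- iota 0 M1) F s = \sum_(s <- iota 0 M2) F s.
Proof.
wlog le_M12 : M1 M2 / (M1 <= M2)%N => [wlog_le F1 F2|F1 _].
  by case: (leqP M1 M2) => [|/ltnW] le; [|symmetry]; apply: wlog_le.
rewrite -(subnKC le_M12) iotaD big_cat /= [X in _ + X]big1_seq ?addr0 // => s /=.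
by rewrite mem_iota => /andP [le _]; apply: F1.
Qed.

Lemma leq_bigmax2_seq (T1 T2 : eqType) (X : seq T1) (Y : T1 -> seq T2)
    (f : T1 -> T2 -> nat) p q :
  p \in X -> q \in Y p -> (f p q <= \max_(p' <- X) \max_(q' <- Y p') f p' q')%N.
Proof.
move=> pX qY; apply: leq_trans (@leq_bigmax_seq _ _ _ (f p) _ qY isT) _.
exact: (@leq_bigmax_seq _ _ _ (fun p' => \max_(q' <- Y p') f p' q') _ pX isT).
Qed.

Section ConformalProducts.
Variables (R : fieldType) (C : lmodType R) (D : C -> C) (pr : nat -> C -> C -> C).
Hypothesis conf : is_conformal D pr.

Lemma prDl n u v b : pr n (u + v) b = pr n u b + pr n v b.
Proof. by have [_ [lin _ _ _ _]] := conf; rewrite -[u]scale1r lin !scale1r. Qed.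

Lemma prDr n a u v : pr n a (u + v) = pr n a u + pr n a v.
Proof. by have [_ [_ lin _ _ _]] := conf; rewrite -[u]scale1r lin !scale1r. Qed.

Lemma prZl n r u b : pr n (r *: u) b = r *: pr n u b.
Proof.
have [_ [lin _ _ _ _]] := conf.
have pr0 : pr n 0 b = 0 by apply/(@addrI _ (pr n 0 b)); rewrite -prDl !addr0.
by rewrite -[r *: u]addr0 lin pr0 addr0.
Qed.

Lemma prZr n r a u : pr n a (r *: u) = r *: pr n a u.
Proof.
have [_ [_ lin _ _ _]] := conf.
have pr0 : pr n a 0 = 0 by apply/(@addrI _ (pr n a 0)); rewrite -prDr !addr0.
by rewrite -[r *: u]addr0 lin pr0 addr0.
Qed.

Lemma loc_boundP a b n : (loc_bound pr a b <= n)%N -> pr n a b = 0.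
Proof.
have [_ [_ _ loc _ _]] := conf; move: n.
exact: (epsilon_spec _ (fun N => forall n, (N <= n)%N -> pr n a b = 0) (loc a b)).
Qed.

End ConformalProducts.

Section CoefficientProducts.
Variables (R : fieldType) (C : lmodType R) (D : C -> C) (pr : nat -> C -> C -> C).
Hypothesis conf : is_conformal D pr.

Lemma sum_coeff_ev (V : zmodType) (H : int -> C -> V) (X : coeff_el C) (S : seq int) :
  (forall e, {morph H e : u v / u + v}) -> uniq S -> {subset map fst X <= S} ->
  \sum_(p <- X) H p.1 p.2 = \sum_(e <- S) H e (coeff_ev X e).
Proof.
move=> H_add S_uniq; elim: X => [|x X IHX] X_S.
  rewrite big_nil big1 // => e _; rewrite /coeff_ev big_nil.
  by apply/(@addrI _ (H e 0)); rewrite -H_add !addr0.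
rewrite big_cons IHX => [|y y_X]; last by apply: X_S; rewrite inE y_X orbT.
have x_S : x.1 \in S by apply: X_S; rewrite inE eqxx.
have ev_cons e : coeff_ev (x :: X) e = (if x.1 == e then x.2 else 0) + coeff_ev X e.
  by rewrite /coeff_ev big_cons; case: ifP; rewrite ?add0r.
rewrite (bigD1_seq x.1) //= [in RHS](bigD1_seq x.1) //= ev_cons eqxx H_add -addrA.
congr (_ + (_ + _)); apply: eq_bigr => e /negbTE x_e.
by rewrite ev_cons eq_sym x_e add0r.
Qed.

Lemma coeff_ev_mul (X Y : coeff_el C) M e :
  (forall p q n, p \in X -> q \in Y -> (M <= n)%N -> pr n p.2 q.2 = 0) ->
  coeff_ev (coeff_mul pr X Y) e =
  \sum_(p <- X) \sum_(q <- Y) \sum_(s <- iota 0 M)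
     (if p.1 + q.1 - s%:Z == e then gbinom R p.1 s *: pr s p.2 q.2 else 0).
Proof.
move=> loc_M; rewrite /coeff_ev /coeff_mul big_flatten big_map.
apply: eq_big_seq => p p_X; rewrite big_flatten big_map.
apply: eq_big_seq => q q_Y; rewrite big_map big_mkcond.
by apply: eq_big_iota_vanishing => n lim_n;
  rewrite ?(loc_boundP conf lim_n) ?(loc_M _ _ _ p_X q_Y lim_n) scaler0 if_same.
Qed.

Lemma coeff_ev_mul_congr (X X' Y Y' : coeff_el C) :
  coeff_ev X =1 coeff_ev X' -> coeff_ev Y =1 coeff_ev Y' ->
  coeff_ev (coeff_mul pr X Y) =1 coeff_ev (coeff_mul pr X' Y').
Proof.
move=> eq_X eq_Y e.
set M := (\max_(p <- X ++ X') \max_(q <- Y ++ Y') loc_bound pr p.2 q.2)%N.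
set G := fun (e1 e2 : int) (c d : C) => \sum_(s <- iota 0 M)
  (if e1 + e2 - s%:Z == e then gbinom R e1 s *: pr s c d else 0).
set S := undup (map fst (X ++ X')); set T := undup (map fst (Y ++ Y')).
have regroup (Z W : coeff_el C) : {subset Z <= X ++ X'} -> {subset W <= Y ++ Y'} ->
    coeff_ev (coeff_mul pr Z W) e =
    \sum_(e1 <- S) \sum_(e2 <- T) G e1 e2 (coeff_ev Z e1) (coeff_ev W e2).
  move=> Z_X W_Y; rewrite (@coeff_ev_mul _ _ M) => [|p q n p_Z q_W]; last first.
    by move/(leq_trans (leq_bigmax2_seq _ (Z_X _ p_Z) (W_Y _ q_W)))/(loc_boundP conf).
  rewrite (@sum_coeff_ev _ (fun e1 c => \sum_(q <- W) G e1 q.1 c q.2) Z S) ?undup_uniq //.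
  - apply: eq_bigr => e1 _.
    rewrite (@sum_coeff_ev _ (fun e2 => G e1 e2 (coeff_ev Z e1)) W T) ?undup_uniq //.
      move=> e2 c d /=; rewrite -big_split; apply: eq_bigr => s _.
      by case: ifP => _ /=; rewrite ?addr0 // (prDr conf) scalerDr.
    by move=> _ /mapP [q /W_Y q_YY ->]; rewrite mem_undup map_f.
  - move=> e1 c d; rewrite -big_split; apply: eq_bigr => q _; rewrite -big_split.
    by apply: eq_bigr => s _; case: ifP => _ /=; rewrite ?addr0 // (prDl conf) scalerDr.
  by move=> _ /mapP [p /Z_X p_XX ->]; rewrite mem_undup map_f.
rewrite !regroup => [|z|z|z|z]; try by rewrite mem_cat => ->; rewrite ?orbT.
by apply: eq_bigr => e1 _; apply: eq_bigr => e2 _; rewrite eq_X eq_Y.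
Qed.

End CoefficientProducts.

Lemma leaves_succ t : exists m, leaves t = m.+1.
Proof.
elim: t => [|t1 [m1 /= ->] t2 [m2 ->]]; first by exists 0%N.
by exists (m1 + m2.+1)%N.
Qed.

Definition pseudo_mon (x y z : seq nat) : seq nat :=
  theta_mon (mon_mul (rcons x 0%N) y ++ rcons z 0%N).

Section PseudoMonomials.
Variables (x y z : seq nat) (m1 m2 : nat).
Hypotheses (size_x : size x = m1) (size_y : size y = m1.+1) (size_z : size z = m2).

Let size_mon_mul : size (mon_mul (rcons x 0%N) y) = m1.+1.
Proof. by rewrite /mon_mul size_map size_zip size_rcons size_x size_y minnn. Qed.

Let size_cat_mon : size (mon_mul (rcons x 0%N) y ++ rcons z 0%N) = (m1.+1 + m2.+1)%N.
Proof. by rewrite size_cat size_mon_mul size_rcons size_z. Qed.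

Lemma size_pseudo_mon : size (pseudo_mon x y z) = (m1.+1 + m2)%N.
Proof. by rewrite /pseudo_mon /theta_mon size_takel ?leq_pred // size_cat_mon addnS. Qed.

Lemma nth_pseudo_mon_l i : (i < m1.+1)%N ->
  nth 0%N (pseudo_mon x y z) i = (nth 0%N x i + nth 0%N y i)%N.
Proof.
move=> lt_i; rewrite /pseudo_mon /theta_mon nth_take; last by rewrite size_cat_mon; lia.
rewrite nth_cat size_mon_mul lt_i /mon_mul (nth_map (0%N, 0%N)); last first.
  by rewrite size_zip size_rcons size_x size_y minnn.
by rewrite nth_zip /= ?nth_rcons_default // size_rcons size_x size_y.
Qed.

Lemma nth_pseudo_mon_r i : (i < m2)%N ->
  nth 0%N (pseudo_mon x y z) (m1.+1 + i) = nth 0%N z i.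
Proof.
move=> lt_i; rewrite /pseudo_mon /theta_mon nth_take; last by rewrite size_cat_mon; lia.
by rewrite nth_cat size_mon_mul ltnNge leq_addr /= addKn nth_rcons_default.
Qed.

End PseudoMonomials.

Section TensorShape.
Variables (R : fieldType) (C : lmodType R) (pr : nat -> C -> C -> C).

Lemma big_pseudo (V : nmodType) n1 (A B : tens_el C) (F : seq nat * C -> V) :
  \sum_(p <- pseudo pr n1 A B) F p =
  \sum_(pA <- A) \sum_(pB <- B) \sum_(s <- iota 0 (loc_bound pr pA.2 pB.2))
    \sum_(j <- iDelta R n1 s)
      F (pseudo_mon pA.1 j.1 pB.1, ((-1) ^+ s / (s`!)%:R * j.2) *: pr s pA.2 pB.2).
Proof.
rewrite /pseudo big_flatten big_map; apply: eq_bigr => pA _.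
rewrite big_flatten big_map; apply: eq_bigr => pB _.
by rewrite big_flatten big_map; apply: eq_bigr => s _; rewrite big_map.
Qed.

Lemma size_tstar t a p : p \in tstar pr t a -> size p.1 = (leaves t).-1.
Proof.
elim: t a p => [|t1 IH1 t2 IH2] a p; first by rewrite inE => /eqP ->.
move=> /flattenP [_ /mapP [pA pA_in ->]] /flattenP [_ /mapP [pB pB_in ->]].
move=> /flattenP [_ /mapP [s _ ->]] /mapP [j j_in ->] /=.
have [[m1 leaves1] [m2 leaves2]] := (leaves_succ t1, leaves_succ t2).
move: j_in; rewrite leaves1 => /iDelta_shape [size_j _].
rewrite (@size_pseudo_mon _ _ _ m1 m2) ?(IH1 _ _ pA_in) ?(IH2 _ _ pB_in) ?leaves1 ?leaves2 //.
by rewrite addSn addnS.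
Qed.

End TensorShape.

(* t^k D^x = risef (-k) x t^(k-x) for the right action of H on k[t,t^-1], so
   (t^(k_0) D^(x_0)) ... (t^(k_(m-1)) D^(x_(m-1))) = act_coef k m x t^(act_deg k m x). *)
Definition act_deg (k : nat -> int) (m : nat) (x : seq nat) : int :=
  \sum_(i < m) (k i - (nth 0%N x i)%:Z).

Definition act_coef (R : comPzRingType) (k : nat -> int) (m : nat) (x : seq nat) : R :=
  \prod_(i < m) risef (- (k i)%:~R) (nth 0%N x i).

Section PseudoMonomialAction.
Variables (k : nat -> int) (x z : seq nat) (m1 m2 : nat).
Hypotheses (size_x : size x = m1) (size_z : size z = m2).

Lemma act_deg_pseudo_mon y : size y = m1.+1 ->
  act_deg k (m1.+1 + m2) (pseudo_mon x y z) =
  act_deg k m1 x + k m1 + act_deg (fun i => k (m1.+1 + i)) m2 z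
  - (\sum_(i < m1.+1) nth 0%N y i)%N%:Z.
Proof.
move=> size_y; rewrite /act_deg big_split_ord /=.
rewrite (eq_bigr (fun i : 'I_m1.+1 => k i - (nth 0%N x i)%:Z - (nth 0%N y i)%:Z)); last first.
  by move=> i _; rewrite (nth_pseudo_mon_l size_x size_y size_z) // PoszD opprD addrA.
rewrite (eq_bigr (fun i : 'I_m2 => k (m1.+1 + i) - (nth 0%N z i)%:Z)); last first.
  by move=> i _; rewrite /= (nth_pseudo_mon_r size_x size_y size_z).
rewrite sumrB big_ord_recr /= nth_default ?size_x // subr0 -(big_morph Posz PoszD (erefl 0%:Z)).
by rewrite addrAC.
Qed.

Lemma act_coef_pseudo_mon (R : comPzRingType) y : size y = m1.+1 ->
  act_coef R k (m1.+1 + m2) (pseudo_mon x y z) =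
  act_coef R k m1 x
  * \prod_(i < m1.+1) risef (- (k i)%:~R + (nth 0%N x i)%:R) (nth 0%N y i)
  * act_coef R (fun i => k (m1.+1 + i)) m2 z.
Proof.
move=> size_y; rewrite /act_coef big_split_ord /=; congr (_ * _); last first.
  by apply: eq_bigr => i _; rewrite /= (nth_pseudo_mon_r size_x size_y size_z).
rewrite (eq_bigr (fun i : 'I_m1.+1 => risef (- (k i)%:~R) (nth 0%N x i)
      * risef (- (k i)%:~R + (nth 0%N x i)%:R) (nth 0%N y i))); last first.
  by move=> i _; rewrite /= (nth_pseudo_mon_l size_x size_y size_z) // risefD.
by rewrite big_split /= big_ord_recr /= nth_default ?size_x // risef0 mulr1.
Qed.

Lemma pseudo_weight (R : fieldType) s :
  \sum_(j <- iDelta R m1.+1 s)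
      (-1) ^+ s / (s`!)%:R * j.2 * act_coef R k (m1.+1 + m2) (pseudo_mon x j.1 z)
  = gbinom R (act_deg k m1 x + k m1) s * act_coef R k m1 x
    * act_coef R (fun i => k (m1.+1 + i)) m2 z.
Proof.
rewrite big_seq_cond (eq_bigr (fun j => (-1) ^+ s / (s`!)%:R * act_coef R k m1 x
    * act_coef R (fun i => k (m1.+1 + i)) m2 z
    * (j.2 * \prod_(i < m1.+1) risef (- (k i)%:~R + (nth 0%N x i)%:R) (nth 0%N j.1 i)))).
  rewrite -big_seq_cond -mulr_sumr (iDelta_risef _ _ (fun i => - (k i)%:~R + (nth 0%N x i)%:R)).
  rewrite gbinom_risef.
  have -> : \sum_(i < m1.+1) (- (k i)%:~R + (nth 0%N x i)%:R) = - (act_deg k m1 x + k m1)%:~R :> R.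
    rewrite big_ord_recr /= nth_default ?size_x // addr0 /act_deg rmorphD /= rmorph_sum.
    by rewrite opprD -sumrN; congr (_ + _); apply: eq_bigr => i _; rewrite rmorphB opprB addrC.
  ring.
move=> j /andP [j_in _]; have [size_j _] := iDelta_shape j_in.
rewrite (act_coef_pseudo_mon _ size_j); ring.
Qed.

End PseudoMonomialAction.

Section ClosedForm.
Variables (R : fieldType) (C : lmodType R) (D : C -> C) (pr : nat -> C -> C -> C).
Hypothesis conf : is_conformal D pr.

(* The monomial (D^x (x) 1) (x)_H c of t^*(a) contributes
   (t^(k_0) D^(x_0)) ... (t^(k_(n-2)) D^(x_(n-2))) x_n (x) c. *)
Definition closed_form t (a : seq C) (k : nat -> int) (xn : seq (int * R)) : coeff_el C :=
  flatten [seq [seq (act_deg k (leaves t).-1 p.1 + q.1,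
                     (q.2 * act_coef R k (leaves t).-1 p.1) *: p.2)
               | p <- tstar pr t a] | q <- xn].

Lemma big_closed_form (V : nmodType) t a k xn (F : int * C -> V) :
  \sum_(w <- closed_form t a k xn) F w =
  \sum_(q <- xn) \sum_(p <- tstar pr t a)
     F (act_deg k (leaves t).-1 p.1 + q.1, (q.2 * act_coef R k (leaves t).-1 p.1) *: p.2).
Proof. by rewrite big_flatten big_map; apply: eq_bigr => q _; rewrite big_map. Qed.

Lemma coeff_ev_closed_form t a k xn e :
  coeff_ev (closed_form t a k xn) e =
  \sum_(q <- xn) \sum_(p <- tstar pr t a)
     (if act_deg k (leaves t).-1 p.1 + q.1 == e then
        (q.2 * act_coef R k (leaves t).-1 p.1) *: p.2 else 0).
Proof. by rewrite /coeff_ev big_mkcond big_closed_form. Qed.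

Lemma mem_closed_form t a k xn w : w \in closed_form t a k xn ->
  exists2 p, p \in tstar pr t a & exists r, w.2 = r *: p.2.
Proof. by move=> /flattenP [_ /mapP [q _ ->]] /mapP [p p_in ->]; exists p => //; eexists. Qed.

Lemma closed_form_mul_monomials (k : nat -> int) m1 m2 (pA pB : seq nat * C) (q : int * R) M e :
  size pA.1 = m1 -> size pB.1 = m2 -> (loc_bound pr pA.2 pB.2 <= M)%N ->
  let kB i := k (m1.+1 + i) in
  let E1 := act_deg k m1 pA.1 + k m1 in
  \sum_(s <- iota 0 M)
    (if E1 + (act_deg kB m2 pB.1 + q.1) - s%:Z == e
     then gbinom R E1 s *: pr s ((1 * act_coef R k m1 pA.1) *: pA.2)
                              ((q.2 * act_coef R kB m2 pB.1) *: pB.2)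
     else 0)
  = \sum_(s <- iota 0 (loc_bound pr pA.2 pB.2)) \sum_(j <- iDelta R m1.+1 s)
     (if act_deg k (m1.+1 + m2) (pseudo_mon pA.1 j.1 pB.1) + q.1 == e
      then (q.2 * act_coef R k (m1.+1 + m2) (pseudo_mon pA.1 j.1 pB.1)) *:
           (((-1) ^+ s / (s`!)%:R * j.2) *: pr s pA.2 pB.2)
      else 0).
Proof.
move=> size_A size_B lim_M kB E1; symmetry.
rewrite (@eq_big_iota_vanishing _ _ _ M) => [|n lim_n|n lim_n]; first last.
- by rewrite big1 // => j _; rewrite (loc_boundP conf (leq_trans lim_M lim_n)) !scaler0 if_same.
- by rewrite big1 // => j _; rewrite (loc_boundP conf lim_n) !scaler0 if_same.
apply: eq_bigr => s _.
rewrite (eq_big_seq (fun j => if E1 + (act_deg kB m2 pB.1 + q.1) - s%:Z == e then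
    (q.2 * ((-1) ^+ s / (s`!)%:R * j.2 * act_coef R k (m1.+1 + m2) (pseudo_mon pA.1 j.1 pB.1)))
      *: pr s pA.2 pB.2 else 0)) => [|j j_in]; last first.
  have [size_j sum_j] := iDelta_shape j_in.
  rewrite (act_deg_pseudo_mon _ size_A size_B size_j) sum_j scalerA addrA.
  congr (if _ then _ *: _ else _); first by rewrite [_ - _ + _]addrAC.
  by rewrite -mulrA [X in _ * X]mulrC.
case: ifP => _; last by rewrite big1.
rewrite -scaler_suml -mulr_sumr (pseudo_weight _ size_A size_B) (prZl conf) (prZr conf).
by rewrite !scalerA mul1r mulrCA -mulrA.
Qed.

Lemma eval_coeff_closed_form t a (k : nat -> int) xn (args : seq (coeff_el C)) :
  (forall i, (i < (leaves t).-1)%N ->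
     coeff_ev (nth [::] args i) =1 coeff_ev [:: (k i, nth 0 a i)]) ->
  coeff_ev (nth [::] args (leaves t).-1) =1
     coeff_ev [seq (q.1, q.2 *: nth 0 a (leaves t).-1) | q <- xn] ->
  coeff_ev (eval_coeff pr t args) =1 coeff_ev (closed_form t a k xn).
Proof.
elim: t a k xn args => [|t1 IH1 t2 IH2] a k xn args args_k args_xn e.
  have -> : eval_coeff pr BLeaf args = nth [::] args 0 by case: args {args_k args_xn}.
  rewrite args_xn coeff_ev_closed_form /coeff_ev big_map big_mkcond /=.
  apply: eq_bigr => q _; rewrite big_seq1 /act_deg /act_coef !big_ord0 add0r mulr1.
  by case: a {args_k args_xn}.
have [[m1 leaves1] [m2 leaves2]] := (leaves_succ t1, leaves_succ t2).
have leavesN : (leaves (BNode t1 t2)).-1 = (m1.+1 + m2)%N by rewrite /= leaves1 leaves2 addnS.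
rewrite leavesN in args_k args_xn.
set A := tstar pr t1 (take (leaves t1) a); set B := tstar pr t2 (drop (leaves t1) a).
rewrite /= (@coeff_ev_mul_congr _ _ _ _ conf _
    (closed_form t1 (take (leaves t1) a) k [:: (k m1, 1)]) _
    (closed_form t2 (drop (leaves t1) a) (fun i => k (leaves t1 + i)) xn)); first last.
- apply: IH2 => [i lt_i e'|e']; rewrite !nth_drop; last by rewrite leaves1 leaves2 /= args_xn.
  by apply: args_k; rewrite leaves1; move: lt_i; rewrite leaves2 /=; lia.
- apply: IH1 => [i|e']; rewrite leaves1 /=.
    by move=> lt_i e'; rewrite !nth_take ?args_k //; lia.
  by rewrite !nth_take // args_k ?(ltn_addr _ (ltnSn _)) // /coeff_ev /= [1 *: _]scale1r.
set M := (\max_(pA <- A) \max_(pB <- B) loc_bound pr pA.2 pB.2)%N.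
rewrite (@coeff_ev_mul _ _ _ _ conf _ _ M) => [|w1 w2 n]; last first.
  move=> /mem_closed_form [pA pA_in [r1 ->]] /mem_closed_form [pB pB_in [r2 ->]] lim_n.
  rewrite (prZl conf) (prZr conf) (loc_boundP conf) ?scaler0 //.
  exact: leq_trans (leq_bigmax2_seq _ pA_in pB_in) lim_n.
rewrite coeff_ev_closed_form big_closed_form big_seq1 /=.
under eq_bigr do rewrite big_closed_form.
rewrite exchange_big leavesN; apply: eq_bigr => q _; rewrite big_pseudo.
apply: eq_big_seq => pA pA_in; apply: eq_big_seq => pB pB_in; rewrite leaves1 leaves2 /=.
apply: closed_form_mul_monomials.
- by rewrite (size_tstar pA_in) leaves1.
- by rewrite (size_tstar pB_in) leaves2.
- exact: (leq_bigmax2_seq (fun pA pB => loc_bound pr pA.2 pB.2) pA_in pB_in).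
Qed.

End ClosedForm.

Section Pairing.
Variable R : fieldType.

Lemma pairingS_eq0 i j : i != j -> pairingS R i j = 0.
Proof. by move=> /negbTE neq_ij; rewrite /pairingS /pairing neq_ij mulr0. Qed.

Lemma size_tuples_below N m s : s \in tuples_below N m -> size s = m.
Proof.
elim: m s => [|m IHm] s /=; first by rewrite inE => /eqP ->.
by move=> /flattenP [_ /mapP [i _ ->]] /mapP [s' s'_in ->] /=; rewrite (IHm _ s'_in).
Qed.

(* The pairing is diagonal: only s = x survives. *)
Lemma sum_tuples_below_pairing (V : lmodType R) N m (x : seq nat) (G : seq nat -> V) :
  size x = m -> (forall i, (i < m)%N -> (nth 0%N x i < N)%N) ->
  \sum_(s <- tuples_below N m)
     (\prod_(i < m) pairingS R (nth 0%N s i) (nth 0%N x i)) *: G s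
  = (\prod_(i < m) pairingS R (nth 0%N x i) (nth 0%N x i)) *: G x.
Proof.
elim: m x G => [|m IHm] [|x0 x] G // => [_ _|[size_x] x_lt].
  by rewrite /= big_seq1 !big_ord0.
have sum_head i : \sum_(s <- [seq i :: s | s <- tuples_below N m])
      (\prod_(j < m.+1) pairingS R (nth 0%N s j) (nth 0%N (x0 :: x) j)) *: G s
    = pairingS R i x0 *: ((\prod_(j < m) pairingS R (nth 0%N x j) (nth 0%N x j)) *: G (i :: x)).
  rewrite big_map -(IHm x (fun s => G (i :: s))) => [|//|j lt_j]; last exact: (x_lt j.+1).
  by rewrite scaler_sumr; apply: eq_bigr => s _; rewrite big_ord_recl scalerA.
rewrite big_flatten big_map (eq_bigr _ (fun i _ => sum_head i)).
rewrite (bigD1_seq x0) ?iota_uniq ?mem_iota ?(x_lt 0%N) //= [X in _ + X]big1 => [|i ne_i].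
  by rewrite addr0 scalerA big_ord_recl.
by rewrite pairingS_eq0 ?scale0r // eq_sym.
Qed.

End Pairing.

Lemma coeff_eq_of_ev (R : fieldType) (C : lmodType R) (D : C -> C) (u v : coeff_el C) :
  coeff_ev u =1 coeff_ev v -> coeff_eq D u v.
Proof. by move=> eq_uv; exists [::] => e; rewrite eq_uv subrr /coeff_ev big_nil. Qed.

Lemma coeff_ev_flatten (R : fieldType) (C : lmodType R) (T : Type) (f : T -> coeff_el C) r e :
  coeff_ev (flatten [seq f s | s <- r]) e = \sum_(s <- r) coeff_ev (f s) e.
Proof. by rewrite /coeff_ev big_flatten big_map. Qed.

Section RightHandSide.
Variables (R : fieldType) (C : lmodType R) (pr : nat -> C -> C -> C).

Definition mon_bound (A : tens_el C) : nat := (\max_(p <- A) \max_(i <- p.1) i).+1.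

Lemma nth_lt_mon_bound A p i : p \in A -> (nth 0%N p.1 i < mon_bound A)%N.
Proof.
move=> p_A; case: (ltnP i (size p.1)) => [lt_i|?]; last by rewrite nth_default.
exact: (@leq_bigmax2_seq _ _ A (fun p => p.1) (fun _ j => j) p _ p_A (mem_nth 0%N lt_i)).
Qed.

Lemma Pmap_out_of_range A s :
  (exists2 i, (i < size s)%N & (mon_bound A <= nth 0%N s i)%N) -> Pmap s A = 0.
Proof.
move=> [i lt_i large_i]; rewrite /Pmap big1_seq // => p /andP [_ p_A].
rewrite (bigD1 (Ordinal lt_i)) //= pairingS_eq0 ?mul0r ?scale0r //.
by rewrite neq_ltn (leq_trans (nth_lt_mon_bound i p_A) large_i) orbT.
Qed.

Definition rhs_term t a (k : nat -> int) (xn : seq (int * R)) (s : seq nat) : coeff_el C :=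
  coeff_scale (\prod_(i < (leaves t).-1) gbinom R (k i) (nth 0%N s i))
    (Pmap_y s [seq (act_deg k (leaves t).-1 s + q.1, q.2) | q <- xn] (tstar pr t a)).

Lemma coeff_ev_rhs_term t a k xn s e :
  coeff_ev (rhs_term t a k xn s) e =
  \sum_(q <- xn) (if act_deg k (leaves t).-1 s + q.1 == e then
     (\prod_(i < (leaves t).-1) gbinom R (k i) (nth 0%N s i))
       *: (q.2 *: Pmap s (tstar pr t a)) else 0).
Proof. by rewrite /coeff_ev !big_map big_mkcond. Qed.

Lemma closed_form_rhs_terms t a k xn : [pchar R] =i pred0 ->
  coeff_ev (closed_form pr t a k xn) =1
  coeff_ev (flatten [seq rhs_term t a k xn s
                    | s <- tuples_below (mon_bound (tstar pr t a)) (leaves t).-1]).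
Proof.
move=> char0 e; set A := tstar pr t a; set m := (leaves t).-1.
rewrite coeff_ev_closed_form coeff_ev_flatten.
under [RHS]eq_bigr do rewrite coeff_ev_rhs_term.
rewrite [RHS]exchange_big /=; apply: eq_bigr => q _.
rewrite (eq_big_seq (fun s => \sum_(p <- A)
   (\prod_(i < m) pairingS R (nth 0%N s i) (nth 0%N p.1 i)) *:
   (if act_deg k m s + q.1 == e then
      ((\prod_(i < m) gbinom R (k i) (nth 0%N s i)) * q.2) *: p.2 else 0))) => [|s s_in].
  rewrite [RHS]exchange_big /=; apply: eq_big_seq => p p_A.
  rewrite sum_tuples_below_pairing => [||i _]; [|exact: size_tstar p_A|exact: nth_lt_mon_bound].
  case: ifP => _; last by rewrite scaler0.
  rewrite scalerA mulrA -big_split /= mulrC /act_coef; congr ((_ * _) *: _).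
  by apply: eq_bigr => i _; rewrite mulrC gbinom_pairingS.
rewrite /Pmap (size_tuples_below s_in); case: ifP => _; last first.
  by rewrite big1 // => p _; rewrite scaler0.
rewrite !scaler_sumr; apply: eq_bigr => p _; rewrite !scalerA; congr (_ *: _).
by rewrite mulrC mulrA.
Qed.

End RightHandSide.

Theorem lemma3p1 (R : fieldType) (C : lmodType R)
    (D : C -> C) (pr : nat -> C -> C -> C)
    (t : bracketing) (a : seq C) (k : seq int) (xn : seq (int * R)) :
  [pchar R] =i pred0 ->
  is_conformal D pr ->
  size a = leaves t ->
  size k = (leaves t).-1 ->
  let n := leaves t in
  (* arguments a_1(t^k_1), ..., a_(n-1)(t^k_(n-1)), a_n(x_n) in Coeff C *)
  let args : seq (coeff_el C) :=
    [seq [:: (nth 0 k i, nth 0 a i)] | i <- iota 0 n.-1]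
      ++ [:: [seq (q.1, q.2 *: nth 0 a n.-1) | q <- xn]] in
  (* the (s_1,...,s_(n-1))-term of the right-hand side *)
  let term (s : seq nat) : coeff_el C :=
    coeff_scale (\prod_(i < n.-1) gbinom R (nth 0 k i) (nth 0%N s i))
      (Pmap_y s
         [seq ((\sum_(i < n.-1) (nth 0 k i - (nth 0%N s i)%:Z)) + q.1, q.2) | q <- xn]
         (tstar pr t a)) in
  exists N : nat,
    (forall s : seq nat, size s = n.-1 -> (exists2 i, (i < n.-1)%N & (N <= nth 0%N s i)%N) ->
       coeff_eq D (term s) [::]) /\
    coeff_eq D (eval_coeff pr t args) (flatten [seq term s | s <- tuples_below N n.-1]).
Proof.
move=> char0 conf _ _ n args term.
exists (mon_bound (tstar pr t a)); split=> [s size_s out_s|].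
  apply: coeff_eq_of_ev => e; rewrite (coeff_ev_rhs_term pr t a (nth 0 k)).
  rewrite Pmap_out_of_range ?size_s // /coeff_ev big_nil big1 // => q _.
  by rewrite !scaler0 if_same.
apply: coeff_eq_of_ev => e.
rewrite (eval_coeff_closed_form conf (k := nth 0 k) (a := a) (xn := xn)).
- exact: (closed_form_rhs_terms pr t a (nth 0 k) xn char0).
- move=> i lt_i e'; rewrite nth_cat size_map size_iota lt_i.
  by rewrite (nth_map 0%N) ?size_iota // nth_iota.
- by move=> e'; rewrite nth_cat size_map size_iota ltnn subnn.
Qed.
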